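(* Let $k\in\{1,2\}$, $\beta\in\mathbb{R}\setminus\{0\}$, $h>0$, and let $p:\mathbb{R}\to\mathbb{R}$ be a bounded, strictly increasing, smooth function with all derivatives bounded; set $p_j=p(x_j)$. Let $\varphi^h\in\ell^2_h(\mathbb{Z})$ be real-valued and $u=u^h(t)$ the solution of $$\frac{d}{dt}u_j + D_+D_0D_-u_j + \beta\frac{k+1}{k+2}\Big[u_j^k D_0u_j + D_0(u^{k+1})_j\Big] + h\,(D_+D_-D_+D_-u)_j=0,\quad j\in\mathbb{Z},\qquad u(0)=\varphi^h.$$ Then $$\begin{aligned} &\tfrac12\tfrac{d}{dt}\|p^{1/2}u\|_{2,h}^2+(D_-u,D_+p\,D_-u)_h+\tfrac12(D_+u,D_-p\,D_+u)_h+h(D_+D_-u,p\,D_+D_-u)_h\\ &=-\tfrac h2(D_+D_-u,D_+p\,D_-u)_h+\tfrac h2(D_+u\,D_-p,D_+D_-u)_h-(D_-u,u_-\,D_0D_-p)_h\\ &\quad-h(D_+D_-u,D_-p\,D_-u)_h-h(D_+D_-u,D_+p\,D_+u)_h-h(D_+D_-u,u\,D_+D_-p)_h\\ &\quad+\tfrac\beta2\tfrac{k+1}{k+2}\big(u^{k+1},u_+D_+p+u_-D_-p\big)_h. \end{aligned}$$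
   Context: $x_j=jh$; $(z,w)_h=\sum_j h z_jw_j$ and $\|z\|_{2,h}^2=(z,z)_h$; $\ell^2_h(\mathbb{Z})$ is the space of sequences with finite $\|\cdot\|_{2,h}$. $D_+u_j=(u_{j+1}-u_j)/h$, $D_-u_j=(u_j-u_{j-1})/h$, $D_0u_j=(u_{j+1}-u_{j-1})/(2h)$; the operators act on the sequence $p=(p_j)$ as well. Translations: $(u_+)_j=u_{j+1}$, $(u_-)_j=u_{j-1}$. Products and powers of sequences (e.g. $D_+p\,D_-u$, $p^{1/2}u$, $u^{k+1}$) are componentwise. *)

From Stdlib Require Import Reals ZArith.
From Coquelicot Require Import Coquelicot.
Open Scope R_scope.

Definition seqZ := Z -> R.

Definition sumZ (f : seqZ) : R :=
  Series (fun n : nat => f (Z.of_nat n)) + Series (fun n : nat => f (- Z.of_nat (S n))%Z).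

(* membership in l^2_h(Z) (h>0 is irrelevant for membership) *)
Definition in_l2 (z : seqZ) : Prop :=
  ex_series (fun n : nat => (z (Z.of_nat n))^2) /\
  ex_series (fun n : nat => (z (- Z.of_nat (S n))%Z)^2).

Definition inner (h : R) (z w : seqZ) : R := sumZ (fun j => h * z j * w j).
Definition normsq (h : R) (z : seqZ) : R := inner h z z.

Definition Dp (h : R) (u : seqZ) : seqZ := fun j => (u (j + 1)%Z - u j) / h.
Definition Dm (h : R) (u : seqZ) : seqZ := fun j => (u j - u (j - 1)%Z) / h.
Definition D0 (h : R) (u : seqZ) : seqZ := fun j => (u (j + 1)%Z - u (j - 1)%Z) / (2 * h).

Definition shp (u : seqZ) : seqZ := fun j => u (j + 1)%Z.
Definition shm (u : seqZ) : seqZ := fun j => u (j - 1)%Z.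

Definition mulZ (a b : seqZ) : seqZ := fun j => a j * b j.
Definition addZ (a b : seqZ) : seqZ := fun j => a j + b j.
Definition powZ (a : seqZ) (n : nat) : seqZ := fun j => a j ^ n.

Definition sample (p : R -> R) (h : R) : seqZ := fun j => p (IZR j * h).

(* smooth with all derivatives bounded (n = 0: p itself bounded) *)
Definition smooth (p : R -> R) : Prop := forall (n : nat) (x : R), ex_derive (Derive_n p n) x.
Definition all_derivs_bounded (p : R -> R) : Prop :=
  forall n : nat, exists M : R, forall x : R, Rabs (Derive_n p n x) <= M.
Definition strictly_increasing (p : R -> R) : Prop := forall x y, x < y -> p x < p y.

Definition l2_deriv (h : R) (u : R -> seqZ) (u' : seqZ) (t : R) : Prop :=
  in_l2 u' /\
  is_lim (fun s => normsq h (fun j => (u (t + s) j - u t j) / s - u' j)) 0 0.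

From Stdlib Require Import Reals ZArith Lra Lia Psatz.
From Coquelicot Require Import Coquelicot.
Open Scope R_scope.

(* Strong differentiability of [u] in l^2_h and boundedness of the weight give
   (1/2) d/dt (P u, u)_h = (P u, u')_h.  Replacing u' by the scheme, the summand of
   "left side minus right side" becomes h P_j u_j times the residual of the scheme
   (which vanishes) plus a discrete divergence G_(j+1) - G_j of a summable flux G,
   whose sum over Z is zero.  Hence the identity holds for every k, beta and every
   bounded weight. *)

Definition summableZ (f : seqZ) : Prop :=
  ex_series (fun n : nat => f (Z.of_nat n)) /\ ex_series (fun n : nat => f (- Z.of_nat (S n))%Z).

Definition boundedZ (f : seqZ) : Prop := exists M, forall j, Rabs (f j) <= M.

Section Summable.

Implicit Types (f g : seqZ).

Lemma summableZ_ext f g : (forall j, f j = g j) -> summableZ f -> summableZ g.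
Proof.
  intros E [Hp Hn]; split; apply (ex_series_ext _ _ (fun n => E _)); assumption.
Qed.

Lemma summableZ_plus f g : summableZ f -> summableZ g -> summableZ (fun j => f j + g j).
Proof.
  intros [Fp Fn] [Gp Gn]; split; now apply (@ex_series_plus R_AbsRing R_NormedModule).
Qed.

Lemma summableZ_scal c f : summableZ f -> summableZ (fun j => c * f j).
Proof.
  intros [Fp Fn]; split; now apply (@ex_series_scal_l R_AbsRing R_NormedModule).
Qed.

Lemma summableZ_le f g : (forall j, Rabs (f j) <= g j) -> summableZ g -> summableZ f.
Proof.
  intros H [Gp Gn]; split;
    (eapply (@ex_series_le R_AbsRing R_CompleteNormedModule); [intros n; apply H | eassumption]).
Qed.

Lemma summableZ_succ_iff f : summableZ (fun j => f (j + 1)%Z) <-> summableZ f.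
Proof.
  unfold summableZ; rewrite (ex_series_incr_1 (fun n => f (Z.of_nat n))),
    (ex_series_incr_1 (fun n => f (- Z.of_nat (S n) + 1)%Z)).
  split; intros [Hp Hn]; split;
    [revert Hp | revert Hn | revert Hp | revert Hn]; apply ex_series_ext; intros n; f_equal; lia.
Qed.

Lemma summableZ_shift (c : Z) f : summableZ f -> summableZ (fun j => f (j + c)%Z).
Proof.
  revert f; induction c as [|c IH|c IH] using Z.peano_ind; intros f Hf.
  - apply (summableZ_ext f); [intros j; now rewrite Z.add_0_r | exact Hf].
  - apply (summableZ_ext (fun j => f (j + 1 + c)%Z)); [intros j; f_equal; lia|].
    apply (summableZ_succ_iff (fun j => f (j + c)%Z)), IH, Hf.
  - apply summableZ_succ_iff.
    apply (summableZ_ext (fun j => f (j + c)%Z)); [intros j; f_equal; lia|].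
    apply IH, Hf.
Qed.

Lemma summableZ_minus f g : summableZ f -> summableZ g -> summableZ (fun j => f j - g j).
Proof.
  intros Hf Hg; apply (summableZ_ext (fun j => f j + (-1) * g j)); [intros; ring|].
  auto using summableZ_plus, summableZ_scal.
Qed.

End Summable.

Lemma Series_ge_term (a : nat -> R) n : (forall m, 0 <= a m) -> ex_series a -> a n <= Series a.
Proof.
  intros Ha Hex.
  assert (Hsum : forall m, a m <= sum_n a m /\ 0 <= sum_n a m).
  { induction m as [|m IH]; [rewrite sum_O; split; [lra | apply Ha]|].
    rewrite sum_Sn; unfold plus; simpl; specialize (Ha (S m)); lra. }
  apply Rle_trans with (sum_n a n); [apply Hsum|].
  apply (is_lim_seq_incr_compare (sum_n a)); [apply Series_correct, Hex|].
  intros m; rewrite sum_Sn; unfold plus; simpl; specialize (Ha (S m)); lra.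
Qed.

Section SumZ.

Implicit Types (f g : seqZ).

Lemma sumZ_ext f g : (forall j, f j = g j) -> sumZ f = sumZ g.
Proof. intros E; unfold sumZ; f_equal; apply Series_ext; intros; apply E. Qed.

Lemma sumZ_plus f g : summableZ f -> summableZ g -> sumZ (fun j => f j + g j) = sumZ f + sumZ g.
Proof. intros [Fp Fn] [Gp Gn]; unfold sumZ; rewrite !Series_plus by assumption; ring. Qed.

Lemma sumZ_scal c f : sumZ (fun j => c * f j) = c * sumZ f.
Proof. unfold sumZ; rewrite !Series_scal_l; ring. Qed.

Lemma sumZ_succ f : summableZ f -> sumZ (fun j => f (j + 1)%Z) = sumZ f.
Proof.
  intros [Fp Fn]; unfold sumZ.
  assert (Hn1 : ex_series (fun n => f (- Z.of_nat (S n) + 1)%Z)).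
  { apply ex_series_incr_1; revert Fn; apply ex_series_ext; intros n; f_equal; lia. }
  rewrite (Series_incr_1 (fun n => f (Z.of_nat n))),
    (Series_incr_1 (fun n => f (- Z.of_nat (S n) + 1)%Z))
    by assumption.
  rewrite (Series_ext (fun n => f (Z.of_nat n + 1)%Z) (fun n => f (Z.of_nat (S n))))
    by (intros n; f_equal; lia).
  rewrite (Series_ext (fun n => f (- Z.of_nat (S (S n)) + 1)%Z) (fun n => f (- Z.of_nat (S n))%Z))
    by (intros n; f_equal; lia).
  replace (- Z.of_nat 1 + 1)%Z with 0%Z by lia; simpl; ring.
Qed.

Lemma sumZ_telescope f : summableZ f -> sumZ (fun j => f (j + 1)%Z - f j) = 0.
Proof.
  intros Hf; pose proof (proj2 (summableZ_succ_iff f) Hf).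
  rewrite (sumZ_ext _ (fun j => f (j + 1)%Z + (-1) * f j)) by (intros; ring).
  rewrite sumZ_plus, sumZ_scal, sumZ_succ by auto using summableZ_scal.
  ring.
Qed.

Lemma sumZ_ge0 f : summableZ f -> (forall j, 0 <= f j) -> 0 <= sumZ f.
Proof.
  intros [Fp Fn] H; unfold sumZ.
  pose proof (Series_ge_term (fun n => f (Z.of_nat n)) 0 (fun n => H _) Fp).
  pose proof (Series_ge_term (fun n => f (- Z.of_nat (S n))%Z) 0 (fun n => H _) Fn).
  pose proof (H 0%Z); pose proof (H (-1)%Z); simpl in *; lra.
Qed.

Lemma sumZ_le f g : summableZ f -> summableZ g -> (forall j, f j <= g j) -> sumZ f <= sumZ g.
Proof.
  intros Hf Hg H.
  assert (0 <= sumZ (fun j => g j + (-1) * f j))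
    by (apply sumZ_ge0; [auto using summableZ_plus, summableZ_scal | intros j; specialize (H j); lra]).
  rewrite sumZ_plus, sumZ_scal in * by auto using summableZ_scal; lra.
Qed.

Lemma sumZ_abs_le f g : summableZ f -> summableZ g -> (forall j, Rabs (f j) <= g j) ->
  Rabs (sumZ f) <= sumZ g.
Proof.
  intros Hf Hg H; apply Rabs_le; split.
  - enough (sumZ (fun j => -1 * f j) <= sumZ g) by (rewrite sumZ_scal in *; lra).
    apply sumZ_le; auto using summableZ_scal.
    intros j; specialize (H j); apply Rabs_le_between in H; lra.
  - apply sumZ_le; auto; intros j; specialize (H j); apply Rabs_le_between in H; lra.
Qed.

Lemma sumZ_minus f g : summableZ f -> summableZ g ->
  sumZ (fun j => f j - g j) = sumZ f - sumZ g.
Proof.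
  intros Hf Hg; rewrite (sumZ_ext _ (fun j => f j + (-1) * g j)) by (intros; ring).
  rewrite sumZ_plus, sumZ_scal by auto using summableZ_scal; ring.
Qed.

End SumZ.

Section Bounded.

Implicit Types (a b : seqZ).

Lemma boundedZ_ext a b : (forall j, a j = b j) -> boundedZ a -> boundedZ b.
Proof. intros E [M H]; exists M; intros j; rewrite <- E; auto. Qed.

Lemma boundedZ_shift (c : Z) a : boundedZ a -> boundedZ (fun j => a (j + c)%Z).
Proof. intros [M H]; exists M; auto. Qed.

Lemma boundedZ_mul a b : boundedZ a -> boundedZ b -> boundedZ (fun j => a j * b j).
Proof.
  intros [M H] [N K]; exists (M * N); intros j; rewrite Rabs_mult.
  apply Rmult_le_compat; auto using Rabs_pos.
Qed.

Lemma boundedZ_lincomb a b (al be : R) : boundedZ a -> boundedZ b ->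
  boundedZ (fun j => al * a j + be * b j).
Proof.
  intros [M H] [N K]; exists (Rabs al * M + Rabs be * N); intros j.
  eapply Rle_trans; [apply Rabs_triang|]; rewrite !Rabs_mult.
  apply Rplus_le_compat; apply Rmult_le_compat_l; auto using Rabs_pos.
Qed.

Lemma boundedZ_pow a n : boundedZ a -> boundedZ (fun j => a j ^ n).
Proof.
  intros [M H]; exists (M ^ n); intros j; rewrite <- RPow_abs.
  apply pow_incr; split; auto using Rabs_pos.
Qed.

End Bounded.

Section L2.

Implicit Types (a b B : seqZ).

Lemma in_l2_ext a b : (forall j, a j = b j) -> in_l2 a -> in_l2 b.
Proof.
  intros E; apply (summableZ_ext (fun j => a j ^ 2) (fun j => b j ^ 2)); intros j; now rewrite E.
Qed.

Lemma in_l2_dominated a b c C : (forall j, c j ^ 2 <= C * (a j ^ 2 + b j ^ 2)) ->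
  in_l2 a -> in_l2 b -> in_l2 c.
Proof.
  intros H Ha Hb; apply (summableZ_le (fun j => c j ^ 2) (fun j => C * (a j ^ 2 + b j ^ 2)));
    [| apply summableZ_scal, summableZ_plus; assumption].
  intros j; rewrite Rabs_right by (apply Rle_ge, pow2_ge_0); apply H.
Qed.

Lemma in_l2_lincomb a b (al be : R) : in_l2 a -> in_l2 b -> in_l2 (fun j => al * a j + be * b j).
Proof. apply (in_l2_dominated a b _ (2 * (al ^ 2 + be ^ 2))); intros j; nra. Qed.

Lemma in_l2_shift (c : Z) a : in_l2 a -> in_l2 (fun j => a (j + c)%Z).
Proof. exact (summableZ_shift c (fun j => a j ^ 2)). Qed.

Lemma in_l2_bounded a : in_l2 a -> boundedZ a.
Proof.
  intros [Hp Hn].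
  exists (Series (fun n => a (Z.of_nat n) ^ 2) + Series (fun n => a (- Z.of_nat (S n))%Z ^ 2) + 1).
  pose proof (fun n => Series_ge_term _ n (fun m => pow2_ge_0 _) Hp) as Tp.
  pose proof (fun n => Series_ge_term _ n (fun m => pow2_ge_0 _) Hn) as Tn.
  pose proof (Rle_trans _ _ _ (pow2_ge_0 _) (Tp 0%nat)).
  pose proof (Rle_trans _ _ _ (pow2_ge_0 _) (Tn 0%nat)).
  assert (Habs : forall x, Rabs x <= x ^ 2 + 1)
    by (intros x; rewrite <- pow2_abs; pose proof (Rabs_pos x); nra).
  intros j; eapply Rle_trans; [apply Habs|].
  destruct (Z_le_gt_dec 0 j) as [Hj | Hj].
  - specialize (Tp (Z.to_nat j)); cbv beta in Tp; rewrite Z2Nat.id in Tp by lia; lra.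
  - specialize (Tn (Z.to_nat (- j - 1))); cbv beta in Tn.
    replace (- Z.of_nat (S (Z.to_nat (- j - 1))))%Z with j in Tn by lia; lra.
Qed.

Lemma in_l2_mul_bounded B a : boundedZ B -> in_l2 a -> in_l2 (fun j => B j * a j).
Proof.
  intros [M HM] Ha; apply (in_l2_dominated a a _ (M ^ 2)); auto; intros j.
  rewrite Rpow_mult_distr, <- (pow2_abs (B j)).
  pose proof (HM j); pose proof (Rabs_pos (B j)); pose proof (pow2_ge_0 (a j)).
  assert (Rabs (B j) ^ 2 <= M ^ 2) by (apply pow_incr; lra).
  nra.
Qed.

Lemma summableZ_mul_l2 a b : in_l2 a -> in_l2 b -> summableZ (fun j => a j * b j).
Proof.
  intros Ha Hb; apply (summableZ_le _ (fun j => / 2 * (a j ^ 2 + b j ^ 2)));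
    [| apply summableZ_scal, summableZ_plus; assumption].
  intros j; rewrite Rabs_mult, <- (pow2_abs (a j)), <- (pow2_abs (b j)).
  pose proof (pow2_ge_0 (Rabs (a j) - Rabs (b j))); nra.
Qed.

Lemma summableZ_inner h a b : in_l2 a -> in_l2 b -> summableZ (fun j => h * a j * b j).
Proof.
  intros Ha Hb; apply (summableZ_ext (fun j => h * (a j * b j))); [intros; ring|].
  apply summableZ_scal, summableZ_mul_l2; assumption.
Qed.

Lemma summableZ_bounded_mul_l2 B a b : boundedZ B -> in_l2 a -> in_l2 b ->
  summableZ (fun j => B j * (a j * b j)).
Proof.
  intros HB Ha Hb; apply (summableZ_ext (fun j => (B j * a j) * b j)); [intros; ring|].
  apply summableZ_mul_l2; [apply in_l2_mul_bounded|]; assumption.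
Qed.

Lemma in_l2_addZ a b : in_l2 a -> in_l2 b -> in_l2 (addZ a b).
Proof.
  intros Ha Hb; eapply in_l2_ext; [| exact (in_l2_lincomb a b 1 1 Ha Hb)].
  intros j; unfold addZ; ring.
Qed.

Lemma in_l2_mul_bounded_r a B : boundedZ B -> in_l2 a -> in_l2 (mulZ a B).
Proof.
  intros HB Ha; eapply in_l2_ext; [| exact (in_l2_mul_bounded B a HB Ha)].
  intros j; unfold mulZ; ring.
Qed.

Lemma in_l2_powZ a n : in_l2 a -> in_l2 (powZ a (S n)).
Proof.
  intros Ha; eapply in_l2_ext;
    [| exact (in_l2_mul_bounded (fun j => a j ^ n) a (boundedZ_pow a n (in_l2_bounded a Ha)) Ha)].
  intros j; unfold powZ; simpl; ring.
Qed.

End L2.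

Section Operators.

Variable h : R.
Implicit Types (a : seqZ).

Lemma boundedZ_Dp a : boundedZ a -> boundedZ (Dp h a).
Proof.
  intros Ha; eapply boundedZ_ext;
    [| exact (boundedZ_lincomb _ _ (/ h) (- / h) (boundedZ_shift 1 a Ha) Ha)].
  intros j; unfold Dp, Rdiv; ring.
Qed.

Lemma boundedZ_Dm a : boundedZ a -> boundedZ (Dm h a).
Proof.
  intros Ha; eapply boundedZ_ext;
    [| exact (boundedZ_lincomb _ _ (/ h) (- / h) Ha (boundedZ_shift (-1) a Ha))].
  intros j; unfold Dm, Rdiv; replace (j - 1)%Z with (j + -1)%Z by lia; ring.
Qed.

Lemma boundedZ_D0 a : boundedZ a -> boundedZ (D0 h a).
Proof.
  intros Ha; eapply boundedZ_ext; [| exact (boundedZ_lincomb _ _ (/ (2 * h)) (- / (2 * h))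
                                      (boundedZ_shift 1 a Ha) (boundedZ_shift (-1) a Ha))].
  intros j; unfold D0, Rdiv; replace (j - 1)%Z with (j + -1)%Z by lia; ring.
Qed.

Lemma in_l2_Dp a : in_l2 a -> in_l2 (Dp h a).
Proof.
  intros Ha; eapply in_l2_ext; [| exact (in_l2_lincomb _ _ (/ h) (- / h) (in_l2_shift 1 a Ha) Ha)].
  intros j; unfold Dp, Rdiv; ring.
Qed.

Lemma in_l2_Dm a : in_l2 a -> in_l2 (Dm h a).
Proof.
  intros Ha; eapply in_l2_ext; [| exact (in_l2_lincomb _ _ (/ h) (- / h) Ha (in_l2_shift (-1) a Ha))].
  intros j; unfold Dm, Rdiv; replace (j - 1)%Z with (j + -1)%Z by lia; ring.
Qed.

End Operators.

Ltac solve_boundedZ :=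
  match goal with
  | |- boundedZ (Dp _ _) => apply boundedZ_Dp; solve_boundedZ
  | |- boundedZ (Dm _ _) => apply boundedZ_Dm; solve_boundedZ
  | |- boundedZ (D0 _ _) => apply boundedZ_D0; solve_boundedZ
  | |- boundedZ (fun j => _ * _) => apply boundedZ_mul; solve_boundedZ
  | |- boundedZ (fun j => _ ^ _) => apply boundedZ_pow; solve_boundedZ
  | |- boundedZ (fun j => _ (j + _)%Z) => apply boundedZ_shift; solve_boundedZ
  | |- boundedZ (fun j => _ (j - _)%Z) => apply boundedZ_shift; solve_boundedZ
  | |- boundedZ (fun j => ?f j) => change (boundedZ f); solve_boundedZ
  | |- boundedZ _ => first [assumption | apply in_l2_bounded; assumption]
  end.

Ltac solve_in_l2 :=
  match goal with
  | |- in_l2 (Dp _ _) => apply in_l2_Dp; solve_in_l2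
  | |- in_l2 (Dm _ _) => apply in_l2_Dm; solve_in_l2
  | |- in_l2 (shp _) => apply (in_l2_shift 1); solve_in_l2
  | |- in_l2 (shm _) => apply (in_l2_shift (-1)); solve_in_l2
  | |- in_l2 (addZ _ _) => apply in_l2_addZ; solve_in_l2
  | |- in_l2 (powZ _ (S _)) => apply in_l2_powZ; solve_in_l2
  | |- in_l2 (mulZ _ _) =>
      first [ apply in_l2_mul_bounded; [solve_boundedZ | solve_in_l2]
            | apply in_l2_mul_bounded_r; [solve_boundedZ | solve_in_l2] ]
  | |- in_l2 (fun j => _ (j + _)%Z) => apply in_l2_shift; solve_in_l2
  | |- in_l2 (fun j => _ (j - _)%Z) => apply in_l2_shift; solve_in_l2
  | |- in_l2 _ => assumption
  end.

Ltac solve_summableZ :=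
  match goal with
  | |- summableZ (fun j => _ + _) => apply summableZ_plus; solve_summableZ
  | |- summableZ (fun j => _ - _) => apply summableZ_minus; solve_summableZ
  | |- summableZ (fun j => _ * _) =>
      first [ apply summableZ_inner; solve_in_l2
            | apply summableZ_bounded_mul_l2; [solve_boundedZ | solve_in_l2 | solve_in_l2]
            | apply summableZ_scal; solve_summableZ ]
  end.

(* Rewrites every index [j + c1 + ... + cn] with integer literals [ci] to [j + c]. *)
Ltac normalize_offsets :=
  unfold Z.sub; repeat rewrite <- Z.add_assoc;
  repeat match goal with
  | |- context [Z.opp ?a] => let c := eval vm_compute in (Z.opp a) in
                              progress change (Z.opp a) with c
  | |- context [Z.add (Zpos ?a) ?b] => let c := eval vm_compute in (Z.add (Zpos a) b) in
                                       progress change (Z.add (Zpos a) b) with c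
  | |- context [Z.add (Zneg ?a) ?b] => let c := eval vm_compute in (Z.add (Zneg a) b) in
                                       progress change (Z.add (Zneg a) b) with c
  end;
  repeat rewrite Z.add_0_r.

(* A discrete primitive of the energy density: [flux (j + 1) - flux j] is the summand
   of "left side minus right side" in [weighted_energy_identity], up to a multiple of
   the residual of the scheme. *)
Definition flux (h beta c : R) (k : nat) (P v : seqZ) (j : Z) : R :=
  / h ^ 2 *
    ( / 2 * (P (j - 2)%Z * (v (j - 1)%Z * v (j - 1)%Z))
    - / 2 * (P (j - 2)%Z * (v (j - 1)%Z * v j))
    - 3 / 2 * (P (j - 1)%Z * (v (j - 1)%Z * v (j - 1)%Z))
    + 3 * (P (j - 1)%Z * (v (j - 1)%Z * v j))
    - 3 / 2 * (P (j - 1)%Z * (v (j - 1)%Z * v (j + 1)%Z))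
    + / 2 * (P j * (v (j - 2)%Z * v j))
    - 3 / 2 * (P j * (v (j - 1)%Z * v j))
    + P j * (v j * v j))
  - beta * c / 2 *
    ( (P (j - 1)%Z * v j ^ k) * (v (j - 1)%Z * v j)
    + (P j * v (j - 1)%Z ^ k) * (v j * v (j - 1)%Z)).

Lemma weighted_energy_identity h beta c k (P v w : seqZ) : h <> 0 -> boundedZ P -> in_l2 v -> in_l2 w ->
  (forall j : Z,
     w j + Dp h (D0 h (Dm h v)) j
     + beta * c * (v j ^ k * D0 h v j + D0 h (powZ v (S k)) j)
     + h * Dp h (Dm h (Dp h (Dm h v))) j = 0) ->
  inner h (mulZ P v) w
  + inner h (Dm h v) (mulZ (Dp h P) (Dm h v))
  + / 2 * inner h (Dp h v) (mulZ (Dm h P) (Dp h v))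
  + h * inner h (Dp h (Dm h v)) (mulZ P (Dp h (Dm h v)))
  =
  - (h / 2) * inner h (Dp h (Dm h v)) (mulZ (Dp h P) (Dm h v))
  + (h / 2) * inner h (mulZ (Dp h v) (Dm h P)) (Dp h (Dm h v))
  - inner h (Dm h v) (mulZ (shm v) (D0 h (Dm h P)))
  - h * inner h (Dp h (Dm h v)) (mulZ (Dm h P) (Dm h v))
  - h * inner h (Dp h (Dm h v)) (mulZ (Dp h P) (Dp h v))
  - h * inner h (Dp h (Dm h v)) (mulZ v (Dp h (Dm h P)))
  + beta / 2 * c
    * inner h (powZ v (S k)) (addZ (mulZ (shp v) (Dp h P)) (mulZ (shm v) (Dm h P))).
Proof.
  intros Hh HP Hv Hw Hscheme.
  apply Rminus_diag_uniq; unfold inner.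
  rewrite <- !sumZ_scal.
  repeat first [rewrite <- sumZ_plus by solve_summableZ | rewrite <- sumZ_minus by solve_summableZ].
  rewrite (sumZ_ext _ (fun j => flux h beta c k P v (j + 1)%Z - flux h beta c k P v j)).
  { apply sumZ_telescope; unfold flux; solve_summableZ. }
  intros j; specialize (Hscheme j).
  match goal with |- ?lhs = _ => match type of Hscheme with ?res = 0 =>
    transitivity (lhs - h * P j * v j * res); [rewrite Hscheme; ring|] end end.
  unfold flux, Dp, Dm, D0, mulZ, shp, shm, powZ, addZ; normalize_offsets.
  rewrite <- !tech_pow_Rmult; field; exact Hh.
Qed.

Lemma normsq_ge0 h (a : seqZ) : 0 <= h -> in_l2 a -> 0 <= normsq h a.
Proof.
  intros Hh Ha; apply sumZ_ge0; [apply summableZ_inner; assumption|].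
  intros j; rewrite Rmult_assoc; apply Rmult_le_pos; [assumption | apply Rle_0_sqr].
Qed.

Lemma weighted_quotient_term_le p M v e w s h lam : 0 < h -> 0 < lam -> Rabs p <= M ->
  Rabs (h * p * (2 * v * e + s * (e + w) ^ 2))
  <= M * lam * (h * v * v) + (M / lam + 2 * M * Rabs s) * (h * e * e) + 2 * M * Rabs s * (h * w * w).
Proof.
  intros Hh Hlam Hp.
  (* AM-GM: [2 v e <= lam v^2 + e^2 / lam] *)
  assert (Hve : Rabs (2 * v * e) <= lam * v ^ 2 + e ^ 2 / lam).
  { assert (E : forall sg, lam * v ^ 2 + e ^ 2 / lam + sg * (2 * v * e) = (lam * v + sg * e) ^ 2 / lam
                                                                            + (1 - sg ^ 2) * e ^ 2 / lam)
      by (intros; field; lra).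
    pose proof (E 1) as E1; pose proof (E (-1)) as E2.
    assert (0 <= (lam * v + 1 * e) ^ 2 / lam) by (apply Rdiv_le_0_compat; [apply pow2_ge_0 | lra]).
    assert (0 <= (lam * v + -1 * e) ^ 2 / lam) by (apply Rdiv_le_0_compat; [apply pow2_ge_0 | lra]).
    apply Rabs_le; split; nra. }
  assert (Hew : (e + w) ^ 2 <= 2 * e ^ 2 + 2 * w ^ 2) by (pose proof (pow2_ge_0 (e - w)); nra).
  assert (Hsum : Rabs (2 * v * e + s * (e + w) ^ 2)
                 <= lam * v ^ 2 + e ^ 2 / lam + Rabs s * (2 * e ^ 2 + 2 * w ^ 2)).
  { eapply Rle_trans; [apply Rabs_triang|]; rewrite (Rabs_mult s), (Rabs_right ((e + w) ^ 2))
      by (apply Rle_ge, pow2_ge_0).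
    pose proof (Rabs_pos s); nra. }
  rewrite !Rabs_mult, (Rabs_right h) by lra.
  apply Rle_trans with (h * M * (lam * v ^ 2 + e ^ 2 / lam + Rabs s * (2 * e ^ 2 + 2 * w ^ 2))).
  - apply Rmult_le_compat; [| apply Rabs_pos | apply Rmult_le_compat_l | ]; auto using Rabs_pos;
      try lra; apply Rmult_le_pos; [lra | apply Rabs_pos].
  - right; unfold Rdiv; ring.
Qed.

Lemma weighted_quotient_error_le h lam s M (P v v1 w : seqZ) :
  0 < h -> 0 < lam -> s <> 0 -> (forall j, Rabs (P j) <= M) ->
  in_l2 v -> in_l2 v1 -> in_l2 w ->
  Rabs ((inner h (mulZ P v1) v1 - inner h (mulZ P v) v) / s - 2 * inner h (mulZ P v) w)
  <= M * lam * normsq h v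
     + (M / lam + 2 * M * Rabs s) * normsq h (fun j => (v1 j - v j) / s - w j)
     + 2 * M * Rabs s * normsq h w.
Proof.
  intros Hh Hlam Hs HM Hv Hv1 Hw.
  set (e := fun j => (v1 j - v j) / s - w j).
  assert (He : in_l2 e).
  { eapply in_l2_ext; [| exact (in_l2_lincomb _ _ 1 (-1) (in_l2_lincomb _ _ (/ s) (- / s) Hv1 Hv) Hw)].
    intros j; unfold e; field; exact Hs. }
  assert (HP : boundedZ P) by (exists M; exact HM).
  assert (Hew : in_l2 (fun j => e j + w j))
    by (eapply in_l2_ext; [| exact (in_l2_lincomb e w 1 1 He Hw)]; intros j; cbv beta; ring).
  replace ((inner h (mulZ P v1) v1 - inner h (mulZ P v) v) / s - 2 * inner h (mulZ P v) w)
    with (sumZ (fun j => h * P j * (2 * v j * e j + s * (e j + w j) ^ 2))).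
  2:{ unfold inner.
      unfold Rdiv; rewrite Rmult_minus_distr_r, !(Rmult_comm _ (/ s)), <- !sumZ_scal,
        <- !sumZ_minus by solve_summableZ.
      apply sumZ_ext; intros j; unfold e, mulZ; field; exact Hs. }
  unfold normsq, inner; rewrite <- !sumZ_scal, <- !sumZ_plus by solve_summableZ.
  apply sumZ_abs_le; [| solve_summableZ |].
  - apply (summableZ_ext (fun j => 2 * (h * mulZ P v j * e j)
                                   + s * (h * mulZ P (fun j => e j + w j) j * (e j + w j))));
      [intros j; unfold mulZ; ring | solve_summableZ].
  - intros j; apply weighted_quotient_term_le; auto.
Qed.

Lemma locally_abs_lt (r : R) : 0 < r -> locally 0 (fun s => Rabs s < r).
Proof.
  intros Hr; exists (mkposreal r Hr); intros s Hs.
  change (Rabs (s - 0) < r) in Hs; now rewrite Rminus_0_r in Hs.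
Qed.

Lemma locally_translate (t : R) (Q : R -> Prop) : locally t Q -> locally 0 (fun s => Q (t + s)).
Proof.
  intros [r Hr]; exists r; intros s Hs; apply Hr.
  change (Rabs (t + s - t) < r); change (Rabs (s - 0) < r) in Hs.
  now replace (t + s - t) with (s - 0) by ring.
Qed.

Lemma is_derive_weighted_normsq h (P : seqZ) (u : R -> seqZ) (w : seqZ) t :
  0 < h -> boundedZ P -> locally t (fun s => in_l2 (u s)) -> l2_deriv h u w t ->
  is_derive (fun s => inner h (mulZ P (u s)) (u s)) t (2 * inner h (mulZ P (u t)) w).
Proof.
  intros Hh [M HM] Hloc [Hw Hlim].
  assert (HM0 : 0 <= M) by (eapply Rle_trans; [apply Rabs_pos | apply (HM 0%Z)]).
  assert (Hv : in_l2 (u t)) by (apply (locally_singleton _ _ Hloc)).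
  set (N := fun s => normsq h (fun j => (u (t + s) j - u t j) / s - w j)) in Hlim.
  pose proof (normsq_ge0 h (u t) (Rlt_le _ _ Hh) Hv) as HSv.
  pose proof (normsq_ge0 h w (Rlt_le _ _ Hh) Hw) as HSw.
  set (Sv := normsq h (u t)) in *; set (Sw := normsq h w) in *.
  apply is_derive_Reals; intros eps Heps.
  (* [lam] makes the AM-GM cross term small; the remaining terms vanish with [N s] and [s]. *)
  set (lam := eps / (4 * (M * Sv + 1))).
  assert (Hlam : 0 < lam) by (apply Rdiv_lt_0_compat; nra).
  set (K := M / lam + 2 * M + 1).
  assert (HK : 1 <= K) by (assert (0 <= M / lam) by (apply Rdiv_le_0_compat; lra); unfold K; lra).
  set (e1 := eps / (4 * K)); set (d2 := eps / (4 * (2 * M * Sw + 1))).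
  assert (He1 : 0 < e1) by (apply Rdiv_lt_0_compat; lra).
  assert (Hd2 : 0 < d2) by (apply Rdiv_lt_0_compat; nra).
  apply is_lim_spec in Hlim.
  assert (Hnear : locally 0 (fun s => Rabs s < 1 /\ Rabs s < d2 /\ in_l2 (u (t + s))
                                      /\ (s <> 0 -> Rabs (N s - 0) < e1))).
  { apply filter_and; [apply locally_abs_lt, Rlt_0_1|].
    apply filter_and; [apply locally_abs_lt, Hd2|].
    apply filter_and; [exact (locally_translate t _ Hloc) | exact (Hlim (mkposreal e1 He1))]. }
  destruct Hnear as [delta Hdelta]; exists delta; intros s Hs0 Hs.
  destruct (Hdelta s ltac:(change (Rabs (s - 0) < delta); now rewrite Rminus_0_r))
    as (Hs1 & Hs2 & Hut & HN).
  specialize (HN Hs0); rewrite Rminus_0_r in HN.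
  pose proof (Rle_lt_trans _ _ _ (Rle_abs _) HN) as HNlt.
  assert (HN0 : 0 <= N s).
  { apply normsq_ge0; [lra|].
    eapply in_l2_ext; [| exact (in_l2_lincomb _ _ 1 (-1) (in_l2_lincomb _ _ (/ s) (- / s) Hut Hv) Hw)].
    intros j; cbv beta; field; exact Hs0. }
  eapply Rle_lt_trans; [apply (weighted_quotient_error_le h lam s M P); auto|].
  fold (N s) Sv Sw.
  assert (Hcross : M * lam * Sv <= eps / 4).
  { apply Rle_trans with (eps / 4 * (M * Sv / (M * Sv + 1))); [right; unfold lam; field; nra|].
    assert (M * Sv / (M * Sv + 1) <= 1) by (apply Rle_div_l; nra). nra. }
  assert (Herror : (M / lam + 2 * M * Rabs s) * N s < eps / 4).
  { apply Rle_lt_trans with (K * N s); [apply Rmult_le_compat_r; [lra | unfold K; nra]|].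
    replace (eps / 4) with (K * e1) by (unfold e1; field; lra).
    apply Rmult_lt_compat_l; lra. }
  assert (Hdrift : 2 * M * Rabs s * Sw < eps / 4).
  { apply Rle_lt_trans with ((2 * M * Sw + 1) * Rabs s); [pose proof (Rabs_pos s); nra|].
    replace (eps / 4) with ((2 * M * Sw + 1) * d2) by (unfold d2; field; nra).
    apply Rmult_lt_compat_l; nra. }
  lra.
Qed.

Theorem lemma3p6 (k : nat) (beta h : R) (p : R -> R) (phi : seqZ)
  (T : R) (u u' : R -> seqZ) :
  (k = 1%nat \/ k = 2%nat) -> beta <> 0 -> 0 < h ->
  strictly_increasing p -> smooth p -> all_derivs_bounded p ->
  in_l2 phi -> 0 < T ->
  (* u is an l^2_h-valued solution on [0,T) with time derivative u' *)
  (forall t, 0 <= t < T -> in_l2 (u t)) ->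
  (forall t, 0 < t < T -> l2_deriv h u (u' t) t) ->
  (forall t, 0 < t < T -> forall j : Z,
     u' t j + Dp h (D0 h (Dm h (u t))) j
     + beta * ((INR k + 1) / (INR k + 2))
       * (u t j ^ k * D0 h (u t) j + D0 h (powZ (u t) (S k)) j)
     + h * Dp h (Dm h (Dp h (Dm h (u t)))) j = 0) ->
  u 0 = phi ->
  forall t, 0 < t < T ->
    let P := sample p h in
    let F := fun s => inner h (mulZ P (u s)) (u s) in
    let v := u t in
    ex_derive F t /\
    / 2 * Derive F t
    + inner h (Dm h v) (mulZ (Dp h P) (Dm h v))
    + / 2 * inner h (Dp h v) (mulZ (Dm h P) (Dp h v))
    + h * inner h (Dp h (Dm h v)) (mulZ P (Dp h (Dm h v)))
    =
    - (h / 2) * inner h (Dp h (Dm h v)) (mulZ (Dp h P) (Dm h v))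
    + (h / 2) * inner h (mulZ (Dp h v) (Dm h P)) (Dp h (Dm h v))
    - inner h (Dm h v) (mulZ (shm v) (D0 h (Dm h P)))
    - h * inner h (Dp h (Dm h v)) (mulZ (Dm h P) (Dm h v))
    - h * inner h (Dp h (Dm h v)) (mulZ (Dp h P) (Dp h v))
    - h * inner h (Dp h (Dm h v)) (mulZ v (Dp h (Dm h P)))
    + beta / 2 * ((INR k + 1) / (INR k + 2))
      * inner h (powZ v (S k))
          (addZ (mulZ (shp v) (Dp h P)) (mulZ (shm v) (Dm h P))).
Proof.
  intros _ _ Hh _ _ Hbd _ _ Hu Hder Hscheme _ t Ht P F v.
  assert (HP : boundedZ P)
    by (destruct (Hbd 0%nat) as [M HM]; exists M; intros j; apply (HM (IZR j * h))).
  assert (Hloc : locally t (fun s => in_l2 (u s))).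
  { apply (filter_imp (fun s => 0 < s /\ s < T)); [intros s Hs; apply Hu; lra|].
    apply (open_and _ _ (open_gt 0) (open_lt T)); lra. }
  assert (HF : is_derive F t (2 * inner h (mulZ P v) (u' t)))
    by exact (is_derive_weighted_normsq h P u (u' t) t Hh HP Hloc (Hder t Ht)).
  split; [eexists; exact HF|].
  rewrite (is_derive_unique _ _ _ HF), <- Rmult_assoc, Rinv_l, Rmult_1_l by lra.
  apply (weighted_energy_identity h beta _ k P v (u' t));
    [lra | assumption | apply Hu; lra | apply Hder, Ht |].
  exact (Hscheme t Ht).
Qed.
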